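(* Let $X_P$ be a flag variety as in the context and $[\omega_0]\in\mathcal K(X_P)$ an integral Kähler class. For $n\in\mathbb Z_{>0}$ let $$\mathcal A_{[\omega_0]}(n):=\{m\in\mathbb Z_{>0}\ :\ 1\le m\le n,\ \exists\,\mathbf E\in\mathrm{Pic}(X_P)\text{ with }\mu_{[\omega_0]}(\mathbf E)=m\}.$$ Then $$\lim_{n\to+\infty}\frac{|\mathcal A_{[\omega_0]}(n)|}{n}=\frac{1}{\tau([\omega_0])},\qquad \tau([\omega_0]):=\gcd\{\deg_{\omega_0}(\mathscr O_\alpha(1))\ :\ \alpha\in\Delta\setminus I\}.$$
   Context: Let $G^{\mathbb C}$ be a connected, simply connected complex Lie group with simple Lie algebra $\mathfrak g^{\mathbb C}$. Fix a Cartan subalgebra, simple roots $\Delta$, root system $\Phi$, fundamental weights $\varpi_\alpha$, $I\subset\Delta$, and the parabolic subgroup $P=P_I$ with Lie algebra $\mathfrak h\oplus\bigoplus_{\alpha\in\Phi^+}\mathfrak g_\alpha\oplus\bigoplus_{\alpha\in\langle I\rangle^-}\mathfrak g_\alpha$ ($\langle I\rangle^-$: negative roots in the span of $I$); $X_P=G^{\mathbb C}/P$, $n_0=\dim_{\mathbb C}X_P$. For $\alpha\in\Delta\setminus I$, $\mathscr O_\alpha(1)=G^{\mathbb C}\times_P\mathbb C_{-\varpi_\alpha}$ is the homogeneous line bundle associated with the character of $P$ with differential $\varpi_\alpha$; these generate $\mathrm{Pic}(X_P)$. $\deg_{\omega_0}(\mathbf E)=\int_{X_P}c_1(\mathbf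 E)\wedge[\omega_0]^{n_0-1}$ and for line bundles $\mu_{[\omega_0]}(\mathbf E)=\deg_{\omega_0}(\mathbf E)$. *)

From HB Require Import structures.
From mathcomp Require Import all_boot all_order all_algebra.
From mathcomp Require Import all_classical all_reals all_analysis.
Set Implicit Arguments. Unset Strict Implicit. Unset Printing Implicit Defensive.
Import Order.TTheory GRing.Theory Num.Theory.
Local Open Scope ring_scope.

(* Abstract model of (Pic(X_P), mu_[omega_0]):
   - Pic : an abelian group (zmodType),
   - mu  : Pic -> int, the slope (= degree) w.r.t. the integral Kaehler class,
   - O   : S -> Pic, the family O_alpha(1), alpha in S = Delta \ I. *)

Definition attained (Pic : zmodType) (mu : Pic -> int) (m : nat) : Prop :=
  exists E : Pic, mu E = m%:Z.

Definition A_card (Pic : zmodType) (mu : Pic -> int) (n : nat) : nat :=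
  #|[set m : 'I_n.+1 | (0 < (m : nat))%N && `[< attained mu m >]]|.

Definition tau (S : finType) (Pic : zmodType) (mu : Pic -> int) (O : S -> Pic) : nat :=
  \big[gcdn/0%N]_(a : S) `|mu (O a)|%N.

From HB Require Import structures.
From mathcomp Require Import all_boot all_order all_algebra.
From mathcomp Require Import all_classical all_reals all_analysis.
Import Order.TTheory GRing.Theory Num.Theory numFieldNormedType.Exports.
Local Open Scope ring_scope.

(** The degree is a group morphism on Pic(X_P), which is generated by the
    O_alpha(1); so its image is the subgroup of Z generated by their degrees,
    namely tau Z (Bezout).  Hence A(n) is the set of positive multiples of tau
    up to n, of cardinality floor(n / tau), and floor(n / tau) / n -> 1 / tau. *)

Lemma card_pos_dvdn t n :
  #|[set m : 'I_n.+1 | (0 < m)%N && (t %| m)%N]| = (n %/ t)%N.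
Proof.
rewrite -sum1_card big_mkcond /=.
under eq_bigr do rewrite inE.
elim: n => [|n IH]; first by rewrite big_ord1 div0n.
rewrite big_ord_recr /= IH.
have [->|t_gt0] := posnP t; first by rewrite !divn0.
by rewrite (divnS _ t_gt0) addnC.
Qed.

Section DegreeImage.
Context {S : finType} {Pic : zmodType} {mu : Pic -> int} {O : S -> Pic}.
Hypothesis mu_add : {morph mu : E F / E + F}.
Hypothesis O_gen : forall E : Pic, exists k : S -> int, E = \sum_(a : S) O a *~ k a.

Let mu_sub : {morph mu : E F / E - F}.
Proof. by move=> E F; rewrite -[in mu E](subrK F E) (mu_add (E - F)) addrK. Qed.

HB.instance Definition _ := GRing.isZmodMorphism.Build Pic int mu mu_sub.

Lemma dvdz_tau_mu E : ((tau mu O)%:Z %| mu E)%Z.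
Proof.
have [k ->] := O_gen E; rewrite raddf_sum rpred_sum // => a _.
by rewrite raddfMz mulrzz dvdz_mulr // dvdzE (biggcdn_inf a) ?dvdnn.
Qed.

Lemma tau_attained : attained mu (tau mu O).
Proof.
rewrite /tau; elim/big_ind: _.
- by exists 0; rewrite raddf0.
- move=> x y [E muE] [F muF]; have [u [v uv]] := Bezoutz x y.
  exists (E *~ u + F *~ v).
  by rewrite raddfD !raddfMz /= !mulrzz muE muF !(mulrC _%:Z) uv.
- move=> a _; exists (O a *~ sgz (mu (O a))).
  by rewrite raddfMz /= mulrzz mulrC -abszEsg.
Qed.

Lemma attainedP m : attained mu m <-> (tau mu O %| m)%N.
Proof.
split=> [[E muE]|/dvdnP[c ->]]; first by have := dvdz_tau_mu E; rewrite muE dvdzE.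
have [E muE] := tau_attained.
by exists (E *+ c); rewrite raddfMn /= muE -mulr_natl natz PoszM.
Qed.

Lemma A_cardE n : A_card mu n = (n %/ tau mu O)%N.
Proof.
rewrite -card_pos_dvdn; apply: eq_card => m; rewrite !inE; congr (_ && _).
by apply/asboolP/idP => /attainedP.
Qed.

End DegreeImage.

Lemma divn_natr_bounds (R : realFieldType) (t n : nat) : (0 < t)%N ->
  t%:R^-1 - n.+1%:R^-1 <= ((n %/ t)%:R / n%:R : R) <= t%:R^-1.
Proof.
move=> t_gt0; have tR : 0 < t%:R :> R by rewrite ltr0n.
have [->|n_gt0] := posnP n.
  by rewrite div0n mul0r subr_le0 invr1 invf_le1 // ler1n t_gt0 invr_ge0 ltW.
have nR : 0 < n%:R :> R by rewrite ltr0n.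
apply/andP; split; last first.
  by rewrite ler_pdivrMr // mulrC ler_pdivlMr // -natrM ler_nat leq_divM.
apply: (@le_trans _ _ ((n %/ t)%:R / n.+1%:R)).
  rewrite lerBlDr -[X in _ + X]mul1r -mulrDl natr1 ler_pdivlMr ?ltr0n //.
  rewrite mulrC ler_pdivrMr //.
  by rewrite -natrM ler_nat ltn_ceil.
by rewrite ler_wpM2l // lef_pV2 ?posrE ?ltr0n // ler_nat.
Qed.

Local Open Scope classical_set_scope.

Lemma cvg_divn_natr (R : realType) (t : nat) :
  (fun n => (n %/ t)%:R / n%:R : R) @ \oo --> (t%:R^-1 : R).
Proof.
have [->|t_gt0] := posnP t.
  by rewrite invr0; under eq_fun do rewrite divn0 mul0r; exact: cvg_cst.
have lower : (fun n => t%:R^-1 - harmonic n : R) @ \oo --> (t%:R^-1 : R).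
  by rewrite -[X in _ --> X]subr0; apply: cvgB; [exact: cvg_cst|exact: cvg_harmonic].
apply: (squeeze_cvgr _ lower (cvg_cst _)).
by near=> n; exact: divn_natr_bounds.
Unshelve. all: by end_near.
Qed.

Theorem theoremE (R : realType) (S : finType) (Pic : zmodType)
  (mu : Pic -> int) (O : S -> Pic)
  (mu_add : forall E F : Pic, mu (E + F) = mu E + mu F)
  (O_gen : forall E : Pic, exists k : S -> int, E = \sum_(a : S) O a *~ k a)
  (deg_pos : forall a : S, 0 < mu (O a)) :
  (fun n : nat => ((A_card mu n)%:R / n%:R : R)) @ \oo --> (((tau mu O)%:R)^-1 : R).
Proof.
under eq_fun do rewrite (A_cardE mu_add O_gen).
exact: cvg_divn_natr.
Qed.
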